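(* Let $\Gamma=(x_j,a_j)_{j=1}^k$ be a sequence of moves that is legal starting from $\eta$ and ends at $\eta'=\Gamma_k(\eta)$. For any set $X$ of susceptible sites, let $\Gamma^X$ be the sequence obtained from $\Gamma$ by ignoring every move that would cure (make healthy) a site in $X$. Then $\Gamma^X$ is also a legal sequence of moves starting from $\eta$, ending at $\eta''=\Gamma^X_k(\eta)$, and for all $j\le k$ the configurations $\Gamma_j(\eta)$ and $\Gamma^X_j(\eta)$ differ only on the set $X$.
   Context: Polluted FA2f setting on $\mathbb{Z}^d$: $\mathcal{S}\subseteq\mathbb{Z}^d$ is the set of susceptible sites, configurations are $\eta\in\{i,h\}^{\mathcal{S}}$ ($i$ infected, $h$ healthy). For $x\in\mathcal{S}$, $c_x(\eta)=1$ if $x$ has at least 2 nearest neighbours in $\mathcal{S}$ that are infected in $\eta$, else $0$. A move is a pair $(x,a)$ with $x\in\mathcal{S}$, $a\in\{i,h\}$; applying it to $\eta$ sets the state at $x$ to $a$; it is legal in $\eta$ if $c_x(\eta)=1$. For a sequence of moves $\Gamma=(x_j,a_j)_{j=1}^k$, $\Gamma_j(\eta)$ is the configuration obtained from $\eta$ by applying the first $j$ moves; $\Gamma$ is legal from $\eta$ if for each $j$ the move $(x_{j+1},a_{j+1})$ is legal in $\Gamma_j(\eta)$. *)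

From mathcomp Require Import all_boot all_order all_algebra.
Set Implicit Arguments. Unset Strict Implicit. Unset Printing Implicit Defensive.
Import GRing.Theory Num.Theory.

Definition site (d : nat) := {ffun 'I_d -> int}.

Definition nn (d : nat) (x y : site d) : bool :=
  (\sum_(i < d) absz (x i - y i))%N == 1%N.

Inductive state := inf | hea.

Definition state_eqb (a b : state) : bool :=
  match a, b with inf, inf | hea, hea => true | _, _ => false end.

(* susceptible sites are the elements of the subtype {x | S x} *)
Definition ssite (d : nat) (S : site d -> Prop) := {x : site d | S x}.

Definition config (d : nat) (S : site d -> Prop) := ssite S -> state.

Definition constraint d (S : site d -> Prop) (eta : config S) (x : ssite S) : Prop :=
  exists y1 y2 : ssite S, proj1_sig y1 <> proj1_sig y2 /\
    nn (proj1_sig x) (proj1_sig y1) /\ nn (proj1_sig x) (proj1_sig y2) /\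
    eta y1 = inf /\ eta y2 = inf.

Definition move d (S : site d -> Prop) := (ssite S * state)%type.

Definition apply_move d (S : site d -> Prop) (eta : config S) (m : move S) : config S :=
  fun y => if proj1_sig y == proj1_sig m.1 then m.2 else eta y.

Definition legal_move d (S : site d -> Prop) (eta : config S) (m : move S) : Prop :=
  constraint eta m.1.

Definition run d (S : site d -> Prop) (eta : config S) (G : seq (move S)) : config S :=
  foldl (@apply_move d S) eta G.

Definition Gamma_j d (S : site d -> Prop) (G : seq (move S)) (j : nat) (eta : config S) :=
  run eta (take j G).

(* legality of a sequence from eta: the (j+1)-th move is legal in Gamma_j(eta) *)
Definition legal_seq d (S : site d -> Prop) (eta : config S) (G : seq (move S)) : Prop :=
  forall (j : nat) (m : move S), onth G j = Some m -> legal_move (Gamma_j G j eta) m.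

Definition keep_move d (S : site d -> Prop) (X : pred (ssite S)) (m : move S) : bool :=
  ~~ (X m.1 && state_eqb m.2 hea).

Definition GammaX d (S : site d -> Prop) (X : pred (ssite S)) (G : seq (move S)) :=
  filter (keep_move X) G.

Definition GammaX_j d (S : site d -> Prop) (X : pred (ssite S)) (G : seq (move S))
  (j : nat) (eta : config S) : config S :=
  run eta (GammaX X (take j G)).

From mathcomp Require Import all_boot all_order all_algebra.
From Stdlib Require Import ProofIrrelevance.
Set Implicit Arguments. Unset Strict Implicit. Unset Printing Implicit Defensive.

(* Along Gamma and Gamma^X the configurations stay related as follows: they agree
   off X, and on X the second one is either equal to the first or infected.  A
   skipped move cures a site of X, so it preserves this relation, and a kept move
   is applied to both sides.  Since the constraint only asks for infected
   neighbours, a move legal for the first configuration is legal for the second. *)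

Section PollutedFA2f.

Variables (d : nat) (S : site d -> Prop).

Fixpoint legal_from (eta : config S) (G : seq (move S)) : Prop :=
  if G is m :: G' then legal_move eta m /\ legal_from (apply_move eta m) G'
  else True.

Lemma legal_seqE (eta : config S) (G : seq (move S)) :
  legal_seq eta G <-> legal_from eta G.
Proof.
elim: G eta => [|m G IHG] eta /=; first by split=> // _ [].
split=> [legalG | [legal_m legalG] [|j] m' /=].
- split; first exact: (legalG 0%N).
  by apply/IHG => j; apply: (legalG j.+1).
- by case=> <-.
- by apply: (proj2 (IHG _) legalG j).
Qed.

Lemma ssite_inj (x y : ssite S) : proj1_sig x = proj1_sig y -> x = y.
Proof. by case: x y => x px [y py] /= eq_xy; apply: subset_eq_compat. Qed.

Lemma constraint_mono (e1 e2 : config S) (x : ssite S) :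
  (forall y, e1 y = inf -> e2 y = inf) -> constraint e1 x -> constraint e2 x.
Proof.
move=> inf12 [y1 [y2 [neq_y [nn1 [nn2 [inf1 inf2]]]]]].
by exists y1, y2; do 4!split=> //; apply: inf12.
Qed.

Variable X : pred (ssite S).

Definition more_infected_on (e1 e2 : config S) : Prop :=
  forall y, e1 y = e2 y \/ (X y /\ e2 y = inf).

Lemma more_infected_on_refl (eta : config S) : more_infected_on eta eta.
Proof. by move=> y; left. Qed.

Lemma more_infected_on_inf (e1 e2 : config S) :
  more_infected_on e1 e2 -> forall y, e1 y = inf -> e2 y = inf.
Proof. by move=> rel12 y; case: (rel12 y) => [<- | [_ ->]]. Qed.

Lemma more_infected_on_notin (e1 e2 : config S) (y : ssite S) :
  more_infected_on e1 e2 -> ~~ X y -> e1 y = e2 y.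
Proof. by move=> /(_ y) [// | [Xy _]]; rewrite Xy. Qed.

Lemma more_infected_on_apply (e1 e2 : config S) (m : move S) :
  more_infected_on e1 e2 ->
  more_infected_on (apply_move e1 m)
                   (if keep_move X m then apply_move e2 m else e2).
Proof.
case: m => x a rel12 y; rewrite /apply_move /keep_move /=.
case: (boolP (X x && state_eqb a hea)) => [/andP[Xx cure] | _] /=; last first.
  by case: eqP => _; [left | apply: rel12].
case: eqP => [/ssite_inj -> | _]; last exact: rel12.
by case: a cure => // _; case: (e2 x); [right | left].
Qed.

Lemma more_infected_on_run (G : seq (move S)) (e1 e2 : config S) :
  more_infected_on e1 e2 -> more_infected_on (run e1 G) (run e2 (GammaX X G)).
Proof.
rewrite /GammaX; elim: G e1 e2 => [|m G IHG] e1 e2 //= rel12.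
have := IHG _ _ (more_infected_on_apply m rel12).
by case: (keep_move X m).
Qed.

Lemma legal_from_GammaX (G : seq (move S)) (e1 e2 : config S) :
  more_infected_on e1 e2 -> legal_from e1 G -> legal_from e2 (GammaX X G).
Proof.
rewrite /GammaX; elim: G e1 e2 => [|m G IHG] e1 e2 //= rel12 [legal_m legalG].
have := IHG _ _ (more_infected_on_apply m rel12) legalG.
case: (keep_move X m) => //= legalGX; split=> //.
exact: constraint_mono (more_infected_on_inf rel12) legal_m.
Qed.

End PollutedFA2f.

Theorem lemma3 (d : nat) (S : site d -> Prop) (eta : config S)
    (G : seq (move S)) (X : pred (ssite S)) :
  legal_seq eta G ->
  legal_seq eta (GammaX X G) /\
  (forall j : nat, (j <= size G)%N ->
     forall x : ssite S, ~~ X x -> Gamma_j G j eta x = GammaX_j X G j eta x).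
Proof.
have rel0 := more_infected_on_refl X eta.
move=> /legal_seqE legalG; split.
  by apply/legal_seqE; apply: legal_from_GammaX rel0 legalG.
move=> j _ x notXx.
exact: more_infected_on_notin (more_infected_on_run _ rel0) notXx.
Qed.
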